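(* Let $n\ge 1$ and $\tau_i=-2\sin\frac{i\pi}{2n}$ for $0\le i\le n$. Let $\nu_0=\nu_n=\frac1{\sqrt2}$ and $\nu_j=1$ for $1\le j\le n-1$. Let $\bar S\in\mathbb{R}^{n\times n}$ have columns $\bar{\bm s}_1,\dots,\bar{\bm s}_n$, where $\bar{\bm s}_j=\nu_j\big(\sin\frac{j\pi}{2n},\sin\frac{3j\pi}{2n},\dots,\sin\frac{(2n-1)j\pi}{2n}\big)^{\mathsf T}$. Let $\bar C\in\mathbb{R}^{(n+1)\times(n+1)}$ have columns $\bar{\bm c}_0,\dots,\bar{\bm c}_n$, where $\bar{\bm c}_j=\nu_j\big(\frac1{\sqrt2},\cos\frac{j\pi}{n},\dots,\cos\frac{(n-1)j\pi}{n},\frac{(-1)^j}{\sqrt2}\big)^{\mathsf T}$. Let $\bar M=\mathrm{diag}(\sqrt2,1,\dots,1,\sqrt2)\in\mathbb{R}^{(n+1)\times(n+1)}$, and let $\bar B\in\mathbb{R}^{n\times(n+1)}$ have entries $\bar B_{k,k}=-1$, $\bar B_{k,k+1}=1$ ($1\le k\le n$), other entries zero. Then $$\bar S^{-1}\bar B\bar M\bar C=\bar S^{\mathsf T}\bar B\bar M\bar C^{-1}=\bar\Gamma,$$ where $\bar\Gamma=[\bm 0,\underline{\Lambda}]\in\mathbb{R}^{n\times(n+1)}$, $\bm 0$ is the zero column of length $n$, and $\underline{\Lambda}=\mathrm{diag}(\tau_1,\dots,\tau_n)$. *)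

From HB Require Import structures.
From mathcomp Require Import all_boot all_order all_algebra.
From mathcomp Require Import reals trigo.
Set Implicit Arguments. Unset Strict Implicit. Unset Printing Implicit Defensive.
Import Order.TTheory GRing.Theory Num.Theory.
Local Open Scope ring_scope.

(* All indices are 0-based ordinals; paper index k (1-based) for rows of
   S, B, Gamma corresponds to ordinal i with k = i+1. *)

Definition nu (R : realType) (n j : nat) : R :=
  if (j == 0)%N || (j == n)%N then 1 / Num.sqrt 2 else 1.

Definition tau (R : realType) (n i : nat) : R :=
  - 2 * sin (i%:R * pi / (2 * n%:R)).

Definition Sbar (R : realType) (n : nat) : 'M[R]_n :=
  \matrix_(i < n, j < n)
    (nu R n j.+1 * sin ((2 * i + 1)%N%:R * (j.+1)%:R * pi / (2 * n%:R))).

Definition Cbar (R : realType) (n : nat) : 'M[R]_n.+1 :=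
  \matrix_(r < n.+1, j < n.+1)
    (nu R n j *
      (if (r == 0 :> nat) then 1 / Num.sqrt 2
       else if (r == n :> nat) then (-1) ^+ j / Num.sqrt 2
       else cos (r%:R * j%:R * pi / n%:R))).

Definition Mbar (R : realType) (n : nat) : 'M[R]_n.+1 :=
  \matrix_(r < n.+1, c < n.+1)
    (if r == c then (if (r == 0 :> nat) || (r == n :> nat) then Num.sqrt 2 else 1)
     else 0).

Definition Bbar (R : realType) (n : nat) : 'M[R]_(n, n.+1) :=
  \matrix_(i < n, c < n.+1)
    (if (c == i :> nat) then -1 else if (c == i.+1 :> nat) then 1 else 0).

Definition Gammabar (R : realType) (n : nat) : 'M[R]_(n, n.+1) :=
  \matrix_(i < n, c < n.+1)
    (if (c == i.+1 :> nat) then tau R n i.+1 else 0).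

From HB Require Import structures.
From mathcomp Require Import all_boot all_order all_algebra.
From mathcomp Require Import reals trigo.
From mathcomp Require Import ring zify.
Import Order.TTheory GRing.Theory Num.Theory.
Local Open Scope ring_scope.

(* Up to the weights [nu], [Sbar] and [Cbar] are the DST-II and DCT-I matrices.
   Multiplying the sums of [cos ((2i+1) x)] and of [cos (2 r h)] by [2 sin x]
   (resp. [2 sin h]) makes them telescope, which yields the discrete orthogonality
   relations [Sbar^T Sbar = Cbar^T Cbar = (n/2) I]; as [Cbar] is symmetric,
   [Sbar^-1 = (2/n) Sbar^T] and [Cbar^-1 = (2/n) Cbar].  Both identities thus reduce
   to [Bbar Mbar Cbar = Sbar Gammabar], which column by column is
   [cos (u + v) - cos (u - v) = -2 sin u sin v]. *)

Section ScaledOrthogonal.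
Context {F : fieldType} {m : nat} {A : 'M[F]_m} {c : F}.
Hypotheses (c_neq0 : c != 0) (trmx_mul_self : A^T *m A = c%:M).

Let left_inverse : (c^-1 *: A^T) *m A = 1%:M.
Proof. by rewrite -scalemxAl trmx_mul_self scale_scalar_mx mulVf. Qed.

Lemma scaled_orthogonal_unitmx : A \in unitmx.
Proof. by have [] := mulmx1_unit left_inverse. Qed.

Lemma scaled_orthogonal_invmx : invmx A = c^-1 *: A^T.
Proof.
by rewrite -[RHS]mulmx1 -(mulmxV scaled_orthogonal_unitmx) mulmxA left_inverse mul1mx.
Qed.

End ScaledOrthogonal.

Section Trigonometry.
Context {R : realType}.

Lemma sin_natpi (m : nat) : sin (m%:R * pi) = 0 :> R.
Proof.
elim: m => [|m IH]; first by rewrite mul0r sin0.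
by rewrite -addn1 natrD mulrDl mul1r sinDpi IH oppr0.
Qed.

Lemma cos_natpi (m : nat) : cos (m%:R * pi) = (-1) ^+ m :> R.
Proof.
elim: m => [|m IH]; first by rewrite mul0r cos0.
by rewrite -addn1 natrD mulrDl mul1r cosDpi IH exprD expr1 mulrN1.
Qed.

Lemma sin_natpi_div_gt0 (d N : nat) : (0 < d < N)%N -> 0 < sin (d%:R * (pi / N%:R)) :> R.
Proof.
case/andP=> d_gt0 lt_dN; have N_gt0 : 0 < N%:R :> R by rewrite ltr0n (ltn_trans d_gt0).
apply: sin_gt0_pi; rewrite mulr_gt0 ?ltr0n ?divr_gt0 ?pi_gt0 //=.
by rewrite mulrCA -[ltRHS]mulr1 ltr_pM2l ?pi_gt0 // ltr_pdivrMr // mul1r ltr_nat.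
Qed.

Lemma sum_cos_odd (x : R) (N : nat) :
  2 * sin x * \sum_(i < N) cos ((2 * i + 1)%N%:R * x) = sin ((2 * N)%N%:R * x).
Proof.
elim: N => [|N IH]; first by rewrite big_ord0 mulr0 mul0r sin0.
rewrite big_ord_recr /= mulrDr IH.
have -> : (2 * N.+1)%N%:R * x = (2 * N + 1)%N%:R * x + x.
  by rewrite ?(natrD, natrM, natrS); ring.
have -> : (2 * N)%N%:R * x = (2 * N + 1)%N%:R * x - x.
  by rewrite ?(natrD, natrM, natrS); ring.
rewrite sinB sinD; ring.
Qed.

Lemma sum_cos_even (h : R) (N : nat) :
  2 * sin h * \sum_(r < N.+1) cos (r%:R * (2 * h)) = sin ((2 * N + 1)%N%:R * h) + sin h.
Proof.
elim: N => [|N IH].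
  by rewrite big_ord_recr big_ord0 /= mul0r cos0 add0r mul1r mulr1 -mulr2n mulr_natl.
rewrite big_ord_recr /= mulrDr IH.
have -> : (2 * N.+1 + 1)%N%:R * h = (N.+1)%:R * (2 * h) + h.
  by rewrite ?(natrD, natrM, natrS); ring.
have -> : (2 * N + 1)%N%:R * h = (N.+1)%:R * (2 * h) - h.
  by rewrite ?(natrD, natrM, natrS); ring.
rewrite sinB sinD; ring.
Qed.

Lemma even_fun_natrB {f : R -> R} : (forall y, f (- y) = f y) ->
  forall (p q : nat) (x : R), f (p%:R * x - q%:R * x) = f (`|p - q|%N%:R * x).
Proof.
move=> f_even p q x; case: (leqP q p) => [le_qp|/ltnW le_pq].
  by rewrite distnEl // natrB // mulrBl.
by rewrite distnEr // natrB // -f_even mulrBl opprB.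
Qed.

End Trigonometry.

Section Weights.
Context {R : realType} {n : nat}.

Lemma nu0 : nu R n 0 = 1 / Num.sqrt 2.
Proof. by rewrite /nu eqxx. Qed.

Lemma nun : nu R n n = 1 / Num.sqrt 2.
Proof. by rewrite /nu eqxx orbT. Qed.

Lemma nu_inner {r : nat} : r != 0%N -> r != n -> nu R n r = 1.
Proof. by move=> /negbTE r_neq0 /negbTE r_neqn; rewrite /nu r_neq0 r_neqn. Qed.

Lemma mul_one_div_sqrt2 : 1 / Num.sqrt 2 * (1 / Num.sqrt 2) = 2^-1 :> R.
Proof. by rewrite -expr2 expr_div_n sqr_sqrtr ?ler0n // expr1n div1r. Qed.

Lemma nu_sqr j : nu R n j ^+ 2 = if (j == 0)%N || (j == n)%N then 2^-1 else 1.
Proof.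
rewrite /nu; case: ifP => _; last by rewrite expr1n.
by rewrite expr_div_n expr1n sqr_sqrtr ?ler0n ?div1r.
Qed.

End Weights.

Section CosineKernels.
Context {R : realType} (n : nat).
Hypothesis n_gt0 : (0 < n)%N.

Let nR_neq0 : n%:R != 0 :> R. Proof. by rewrite pnatr_eq0 -lt0n. Qed.

Definition odd_cos_sum (x : R) := \sum_(i < n) cos ((2 * i + 1)%N%:R * x).

Definition nu_cos_sum (x : R) := \sum_(r < n.+1) nu R n r ^+ 2 * cos (r%:R * x).

Lemma odd_cos_sumN x : odd_cos_sum (- x) = odd_cos_sum x.
Proof. by apply: eq_bigr => i _; rewrite mulrN cosN. Qed.

Lemma odd_cos_sum0 : odd_cos_sum 0 = n%:R.
Proof.
rewrite /odd_cos_sum (eq_bigr (fun _ => 1)) => [|i _]; last by rewrite mulr0 cos0.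
by rewrite sumr_const card_ord.
Qed.

Lemma odd_cos_sum_2n : odd_cos_sum ((2 * n)%N%:R * (pi / (2 * n%:R))) = - n%:R.
Proof.
have -> : (2 * n)%N%:R * (pi / (2 * n%:R)) = 1%:R * pi :> R by rewrite natrM; field.
rewrite /odd_cos_sum (eq_bigr (fun _ => -1)) => [|i _]; last first.
  by rewrite mulrA -natrM muln1 cos_natpi exprD exprM sqrrN !expr1n mul1r.
by rewrite sumr_const card_ord mulNrn.
Qed.

Lemma odd_cos_sum_eq0 (d : nat) :
  (0 < d < 2 * n)%N -> odd_cos_sum (d%:R * (pi / (2 * n%:R))) = 0.
Proof.
move=> d_range; set x := d%:R * _.
have sin_gt0 : 0 < sin x by rewrite /x -natrM sin_natpi_div_gt0.
have := sum_cos_odd x n; rewrite -/(odd_cos_sum x).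
have -> : (2 * n)%N%:R * x = d%:R * pi by rewrite /x natrM; field.
rewrite sin_natpi => /eqP; rewrite !mulf_eq0 (gt_eqF sin_gt0) pnatr_eq0 /=.
by move/eqP.
Qed.

Lemma sum_nu_sqr (f : nat -> R) :
  \sum_(r < n.+1) nu R n r ^+ 2 * f r = \sum_(r < n.+1) f r - (f 0%N + f n) / 2.
Proof.
case: n n_gt0 => // n' _.
rewrite big_ord_recl big_ord_recr [in RHS]big_ord_recl [in RHS]big_ord_recr /=.
rewrite !nu_sqr /= eqxx /=.
rewrite (eq_bigr (fun i : 'I_n' => f (bump 0 i))) => [|i _]; last first.
  by rewrite nu_sqr /bump /= add1n eqSS (ltn_eqF (ltn_ord i)) mul1r.
by rewrite /bump /=; field.
Qed.

Lemma nu_cos_sumN x : nu_cos_sum (- x) = nu_cos_sum x.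
Proof. by apply: eq_bigr => i _; rewrite mulrN cosN. Qed.

Lemma nu_cos_sum_period x : (forall r : nat, cos (r%:R * x) = 1) -> nu_cos_sum x = n%:R.
Proof.
move=> cos1; rewrite /nu_cos_sum (sum_nu_sqr (fun r : nat => cos (r%:R * x))).
rewrite (eq_bigr (fun _ => 1)) => [|i _]; last exact: cos1.
by rewrite sumr_const card_ord !cos1 -addn1 natrD; field.
Qed.

Lemma nu_cos_sum0 : nu_cos_sum 0 = n%:R.
Proof. by apply: nu_cos_sum_period => r; rewrite mulr0 cos0. Qed.

Lemma nu_cos_sum_2n : nu_cos_sum ((2 * n)%N%:R * (pi / n%:R)) = n%:R.
Proof.
apply: nu_cos_sum_period => r.
have -> : r%:R * ((2 * n)%N%:R * (pi / n%:R)) = (2 * r)%N%:R * pi :> R.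
  by rewrite !natrM; field.
by rewrite cos_natpi exprM sqrrN !expr1n.
Qed.

(* With [h = d pi / (2 n)], the plain sum of [cos (2 r h)] is [((-1)^d + 1) / 2] by
   [sum_cos_even], which is exactly cancelled by the two halved endpoint terms. *)
Lemma nu_cos_sum_eq0 (d : nat) :
  (0 < d < 2 * n)%N -> nu_cos_sum (d%:R * (pi / n%:R)) = 0.
Proof.
move=> d_range; set h : R := d%:R * (pi / (2 * n%:R)).
have sin_gt0 : 0 < sin h by rewrite /h -natrM sin_natpi_div_gt0.
have -> : d%:R * (pi / n%:R) = 2 * h by rewrite /h; field.
rewrite /nu_cos_sum (sum_nu_sqr (fun r : nat => cos (r%:R * (2 * h)))) mul0r cos0.
have -> : cos (n%:R * (2 * h)) = (-1) ^+ d by rewrite -cos_natpi /h; congr cos; field.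
have := sum_cos_even h n.
have -> : (2 * n + 1)%N%:R * h = d%:R * pi + h by rewrite /h natrD natrM; field.
rewrite sinD sin_natpi cos_natpi mul0r add0r => sum_cos.
have -> : \sum_(r < n.+1) cos (r%:R * (2 * h)) = ((-1) ^+ d + 1) / 2.
  apply: (mulfI (x := 2 * sin h)); first by rewrite mulf_neq0 ?pnatr_eq0 // gt_eqF.
  by rewrite sum_cos; field.
by field.
Qed.

Lemma sum_sin_odd_mul (a b : R) :
  \sum_(i < n) sin ((2 * i + 1)%N%:R * a) * sin ((2 * i + 1)%N%:R * b)
  = (odd_cos_sum (a - b) - odd_cos_sum (a + b)) / 2.
Proof.
rewrite -sumrB mulr_suml; apply: eq_bigr => i _.
by rewrite mulrBr mulrDr cosB cosD; field.
Qed.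

Lemma sum_nu_cos_mul (a b : R) :
  \sum_(r < n.+1) nu R n r ^+ 2 * (cos (r%:R * a) * cos (r%:R * b))
  = (nu_cos_sum (a - b) + nu_cos_sum (a + b)) / 2.
Proof.
rewrite -big_split mulr_suml; apply: eq_bigr => i _.
by rewrite /= mulrBr mulrDr cosB cosD; field.
Qed.

End CosineKernels.

Section Matrices.
Context {R : realType} {n : nat}.
Hypothesis n_gt0 : (0 < n)%N.

Let nR_neq0 : n%:R != 0 :> R. Proof. by rewrite pnatr_eq0 -lt0n. Qed.

Let sqrt2_neq0 : Num.sqrt 2 != 0 :> R. Proof. by rewrite gt_eqF ?sqrtr_gt0 ?ltr0n. Qed.

Lemma SbarE i j :
  Sbar R n i j = nu R n j.+1 * sin ((2 * i + 1)%N%:R * ((j.+1)%:R * (pi / (2 * n%:R)))).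
Proof. by rewrite mxE !mulrA. Qed.

Lemma CbarE r j :
  Cbar R n r j = nu R n r * nu R n j * cos (r%:R * (j%:R * (pi / n%:R))).
Proof.
rewrite mxE; case: ifP => [/eqP->|/negbT r_neq0].
  by rewrite mul0r cos0 nu0; ring.
case: ifP => [/eqP->|/negbT r_neqn]; last by rewrite (nu_inner r_neq0 r_neqn) mul1r !mulrA.
have -> : n%:R * (j%:R * (pi / n%:R)) = j%:R * pi :> R by field.
by rewrite nun cos_natpi; ring.
Qed.

Lemma tr_Cbar : (Cbar R n)^T = Cbar R n.
Proof. by apply/matrixP => r j; rewrite mxE !CbarE mulrCA (mulrC (nu R n j)). Qed.

Lemma Sbar_gram : (Sbar R n)^T *m Sbar R n = (n%:R / 2)%:M.
Proof.
apply/matrixP => a b; rewrite !mxE.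
pose t : R := pi / (2 * n%:R).
rewrite (eq_bigr (fun i : 'I_n => nu R n a.+1 * nu R n b.+1 *
    (sin ((2 * i + 1)%N%:R * ((a.+1)%:R * t)) * sin ((2 * i + 1)%N%:R * ((b.+1)%:R * t)))));
  last by move=> i _; rewrite mxE !SbarE; ring.
rewrite -mulr_sumr sum_sin_odd_mul (even_fun_natrB (odd_cos_sumN n)) -mulrDl -natrD.
have lt_an := ltn_ord a; have lt_bn := ltn_ord b.
have [<-|neq_ab] := eqVneq a b; last first.
  rewrite !odd_cos_sum_eq0 ?subrr ?mul0r ?mulr0 //;
    by move: neq_ab; rewrite -val_eqE /= => ?; lia.
rewrite subrr mul0r odd_cos_sum0 mulr1n.
have [/eqP an|an] := boolP (a.+1 == n).
  have -> : (a.+1 + a.+1 = 2 * n)%N by lia.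
  by rewrite odd_cos_sum_2n // an nun mul_one_div_sqrt2; field.
by rewrite odd_cos_sum_eq0 ?(nu_inner _ an) //; [field | lia].
Qed.

Lemma Cbar_gram : (Cbar R n)^T *m Cbar R n = (n%:R / 2)%:M.
Proof.
apply/matrixP => a b; rewrite !mxE.
pose s : R := pi / n%:R.
rewrite (eq_bigr (fun r : 'I_n.+1 => nu R n a * nu R n b *
    (nu R n r ^+ 2 * (cos (r%:R * (a%:R * s)) * cos (r%:R * (b%:R * s))))));
  last by move=> r _; rewrite mxE !CbarE; ring.
rewrite -mulr_sumr sum_nu_cos_mul (even_fun_natrB (nu_cos_sumN n)) -mulrDl -natrD.
have lt_an := ltn_ord a; have lt_bn := ltn_ord b.
have [<-|neq_ab] := eqVneq a b; last first.
  rewrite !nu_cos_sum_eq0 ?addr0 ?mul0r ?mulr0 //;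
    by move: neq_ab; rewrite -val_eqE /= => ?; lia.
rewrite subrr mul0r nu_cos_sum0 // mulr1n.
have [/eqP a0|a0] := boolP (a == 0 :> nat).
  by rewrite a0 mul0r nu_cos_sum0 // nu0 mul_one_div_sqrt2; field.
have [/eqP an|an] := boolP (a == n :> nat).
  have -> : (a + a = 2 * n)%N by lia.
  by rewrite nu_cos_sum_2n // an nun mul_one_div_sqrt2; field.
by rewrite nu_cos_sum_eq0 ?(nu_inner a0 an) //; [field | lia].
Qed.

Lemma Mbar_Cbar r j :
  (Mbar R n *m Cbar R n) r j = nu R n j * cos (r%:R * (j%:R * (pi / n%:R))).
Proof.
rewrite mxE (bigD1 r) //= big1 => [|k /negbTE k_neq_r]; last by rewrite mxE eq_sym k_neq_r mul0r.
rewrite mxE eqxx CbarE addr0.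
case: ifP => [/orP[/eqP->|/eqP->]|/negbT]; first by rewrite nu0; field.
  by rewrite nun; field.
by rewrite negb_or => /andP[r_neq0 r_neqn]; rewrite (nu_inner r_neq0 r_neqn); ring.
Qed.

Lemma Bbar_mulmx m (A : 'M[R]_(n.+1, m)) k j :
  (Bbar R n *m A) k j = A (lift ord0 k) j - A (widen_ord (leqnSn n) k) j.
Proof.
rewrite mxE (bigD1 (widen_ord (leqnSn n) k)) //=.
rewrite (bigD1 (lift ord0 k)) /=; last by rewrite -val_eqE /= /bump add1n gtn_eqF.
rewrite big1 => [|c /andP[]]; last first.
  by rewrite -!val_eqE /= /bump add1n !mxE => /negbTE-> /negbTE->; rewrite mul0r.
rewrite !mxE /= eqxx /bump add1n eqxx gtn_eqF //; ring.
Qed.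

Lemma mulmx_Gammabar_ord0 m (A : 'M[R]_(m, n)) k : (A *m Gammabar R n) k ord0 = 0.
Proof. by rewrite mxE big1 // => i _; rewrite mxE mulr0. Qed.

Lemma mulmx_Gammabar_lift m (A : 'M[R]_(m, n)) k (j : 'I_n) :
  (A *m Gammabar R n) k (lift ord0 j) = A k j * tau R n j.+1.
Proof.
rewrite mxE (bigD1 j) //= big1 => [|i]; last first.
  by rewrite -val_eqE /= => /negbTE i_neq_j; rewrite mxE lift0 eqSS eq_sym i_neq_j mulr0.
by rewrite mxE lift0 eqxx addr0.
Qed.

Lemma Bbar_Mbar_Cbar : Bbar R n *m Mbar R n *m Cbar R n = Sbar R n *m Gammabar R n.
Proof.
apply/matrixP => k j; rewrite -mulmxA Bbar_mulmx !Mbar_Cbar.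
case: (unliftP ord0 j) => [j'|] ->; last by rewrite mulmx_Gammabar_ord0 !mul0r !mulr0 subrr.
rewrite mulmx_Gammabar_lift SbarE /tau !lift0 /=.
pose t : R := pi / (2 * n%:R).
pose u : R := (2 * k + 1)%N%:R * ((j'.+1)%:R * t).
pose v : R := (j'.+1)%:R * t.
have -> : (k.+1)%:R * ((j'.+1)%:R * (pi / n%:R)) = u + v.
  by rewrite /u /v /t -addn1 ?(natrD, natrM); field.
have -> : k%:R * ((j'.+1)%:R * (pi / n%:R)) = u - v.
  by rewrite /u /v /t ?(natrD, natrM); field.
have -> : (j'.+1)%:R * pi / (2 * n%:R) = v by rewrite /v /t mulrA.
by rewrite -/t -/u cosB cosD; ring.
Qed.

End Matrices.

Theorem lemma5p1 (R : realType) (n : nat) (hn : (0 < n)%N) :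
  Sbar R n \in unitmx /\ Cbar R n \in unitmx /\
  invmx (Sbar R n) *m Bbar R n *m Mbar R n *m Cbar R n = Gammabar R n /\
  (Sbar R n)^T *m Bbar R n *m Mbar R n *m invmx (Cbar R n) = Gammabar R n.
Proof.
set c : R := n%:R / 2.
have c_neq0 : c != 0 by rewrite mulf_neq0 ?invr_eq0 ?pnatr_eq0 -?lt0n.
have uS := scaled_orthogonal_unitmx c_neq0 (Sbar_gram hn).
have uC := scaled_orthogonal_unitmx c_neq0 (Cbar_gram hn).
have invS := scaled_orthogonal_invmx c_neq0 (Sbar_gram hn).
have invC := scaled_orthogonal_invmx c_neq0 (Cbar_gram hn).
have SinvBMC : invmx (Sbar R n) *m Bbar R n *m Mbar R n *m Cbar R n = Gammabar R n.
  by rewrite -!mulmxA [Bbar R n *m _]mulmxA Bbar_Mbar_Cbar // mulKmx.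
split=> //; split=> //; split=> //.
have -> : (Sbar R n)^T = c *: invmx (Sbar R n) by rewrite invS scalerA mulfV // scale1r.
by rewrite invC tr_Cbar // -!scalemxAl -scalemxAr scalerA mulfV // scale1r.
Qed.
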